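(* Let $k=\mathbb C$, $n\ge2$, $A=\mathbb C_{-1}[x_1,\dots,x_n]$, and let $M(n,1,2)$ be the subgroup of $\mathrm{Aut}(A)$ generated by the mystic reflections $\tau_{i,j,1}$ ($i\ne j$), identified via its action on $A_1$ in the basis $x_1,\dots,x_n$ with a group of $n\times n$ matrices. Then $M(n,1,2)$ is the group of $n\times n$ signed permutation matrices (permutation matrices with entries replaced by $\pm1$) of determinant $1$, of order $2^{n-1}n!$, and $M(n,1,2)$ is isomorphic to the classical reflection group $G(2,2,n)$ if and only if $n$ is odd.
   Context: $A=\mathbb C_{-1}[x_1,\dots,x_n]$ is generated by $x_1,\dots,x_n$ with $x_jx_i=-x_ix_j$ for $i\ne j$. For $s\ne t$, $\tau_{s,t,1}$ is the graded automorphism with $x_s\mapsto x_t$, $x_t\mapsto-x_s$, $x_i\mapsto x_i$ otherwise. $G(2,2,n)$ is the group of $n\times n$ matrices $DP$ with $P$ a permutation matrix and $D$ a diagonal matrix with entries $\pm1$ containing an even number of $-1$'s. *)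

(* k = C is modelled by algC (algebraic complex numbers);
   all matrices involved have entries in {0,1,-1}. *)
From HB Require Import structures.
From mathcomp Require Import all_boot all_order all_algebra all_fingroup all_field.
Set Implicit Arguments. Unset Strict Implicit. Unset Printing Implicit Defensive.
Import GRing.Theory Num.Theory.
Local Open Scope ring_scope.

(* Matrix of the mystic reflection tau_{s,t,1} acting on A_1 in the basis
   x_1..x_n (column j = coordinates of the image of x_j):
   x_s |-> x_t, x_t |-> - x_s, x_i |-> x_i otherwise. *)
Definition tau_mx (n : nat) (s t : 'I_n) : 'M[algC]_n :=
  \matrix_(i, j) (if j == s then (i == t)%:R
                  else if j == t then - (i == s)%:R
                  else (i == j)%:R).

Inductive Mn12 (n : nat) : 'M[algC]_n -> Prop :=
| Mn12_one : Mn12 1%:M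
| Mn12_tau (s t : 'I_n) : s != t -> Mn12 (tau_mx s t)
| Mn12_mul (A B : 'M[algC]_n) : Mn12 A -> Mn12 B -> Mn12 (A *m B)
| Mn12_inv (A : 'M[algC]_n) : Mn12 A -> Mn12 (invmx A).

Definition signed_perm_mx (n : nat) (M : 'M[algC]_n) : Prop :=
  exists (d : 'rV[algC]_n) (p : 'S_n),
    (forall i, d 0 i = 1 \/ d 0 i = -1) /\ M = diag_mx d *m perm_mx p.

Definition G22n (n : nat) (M : 'M[algC]_n) : Prop :=
  exists (d : 'rV[algC]_n) (p : 'S_n),
    (forall i, d 0 i = 1 \/ d 0 i = -1) /\
    ~~ odd #|[set i | d 0 i == -1]| /\ M = diag_mx d *m perm_mx p.

Definition mx_group_isomorphic (n : nat) (G H : 'M[algC]_n -> Prop) : Prop :=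
  exists f : 'M[algC]_n -> 'M[algC]_n,
    [/\ (forall A, G A -> H (f A)),
        (forall A B, G A -> G B -> f A = f B -> A = B),
        (forall C, H C -> exists2 A, G A & f A = C) &
        (forall A B, G A -> G B -> f (A *m B) = f A *m f B)].

(* Every matrix involved is a signed permutation matrix spmx b p (row i has
   the sign (-1)^(b i) in column p i), and these multiply through a twisted
   product of the parameters (b, p).  The proof works with those parameters:
   1. tau_{s,t,1} = spmx (sign at s) (s t), so every element of M(n,1,2)
      satisfies parity b = sign of p, i.e. has determinant 1; conversely the
      squares tau_{s,t,1}^2 give every even diagonal sign change and products
      of reflections lift every permutation, so M(n,1,2) is exactly the group
      of signed permutation matrices of determinant 1.
   2. Toggling one sign pairs the admissible parameters with the others, so
      there are 2^(n-1) n! of them.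
   3. For n odd, M |-> (prod_i sum_j M_ij) M rescales by the sign of the
      matrix and is an isomorphism onto G(2,2,n).  For n even, -1 is the n-th
      power of a signed n-cycle of M(n,1,2) and is central, while in G(2,2,n)
      a central n-th power must be 1: its signs are constant and, lifting
      spmx b p to a permutation of the 2n vectors +-x_i, an n-th root of -1
      is an odd permutation there, forcing an odd number of signs in b. *)

From HB Require Import structures.
From mathcomp Require Import all_boot all_order all_algebra all_fingroup all_field.
From mathcomp Require Import cyclic.
Set Implicit Arguments. Unset Strict Implicit. Unset Printing Implicit Defensive.
Import GRing.Theory Num.Theory.
Local Open Scope ring_scope.

Definition sgn (k : bool) : algC := (-1) ^+ k.

Lemma sgnD k l : sgn (k (+) l) = sgn k * sgn l.
Proof. exact: signr_addb. Qed.

Lemma sgn_inj : injective sgn.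
Proof. exact: signr_inj. Qed.

Lemma sgn_neq0 k : sgn k != 0.
Proof. by rewrite /sgn signr_eq0. Qed.

Lemma sgn_eq1 k : (sgn k == 1) = ~~ k.
Proof. by rewrite -[1]/(sgn false) (inj_eq sgn_inj); case: k. Qed.

Lemma sgn_eqN1 k : (sgn k == -1) = k.
Proof. by have -> : -1 = sgn true by []; rewrite (inj_eq sgn_inj); case: k. Qed.

Lemma pm1_sgn (x : algC) : x = 1 \/ x = -1 -> x = sgn (x == -1).
Proof.
by case=> ->; [have /= -> := sgn_eqN1 false | rewrite eqxx /sgn expr1].
Qed.

Lemma sgn_pm1 k : sgn k = 1 \/ sgn k = -1.
Proof. by case: k; [right; rewrite /sgn expr1 | left]. Qed.

Section SignedPermutations.
Variable n : nat.
Implicit Types (b c : {ffun 'I_n -> bool}) (p q : 'S_n).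

Definition spmx b p : 'M[algC]_n :=
  \matrix_(i, j) (if p i == j then sgn (b i) else 0).

Definition signs0 : {ffun 'I_n -> bool} := [ffun _ => false].
Definition signsT : {ffun 'I_n -> bool} := [ffun _ => true].
Definition sign_at (s : 'I_n) : {ffun 'I_n -> bool} := [ffun i => i == s].

(* The sign vectors of a product, of an inverse, and of a scalar multiple
   by sgn k. *)
Definition signs_mul b p c : {ffun 'I_n -> bool} := [ffun i => b i (+) c (p i)].
Definition signs_inv b p : {ffun 'I_n -> bool} := [ffun i => b ((p^-1)%g i)].
Definition signs_flip b k : {ffun 'I_n -> bool} := [ffun i => b i (+) k].

Definition parity b : bool := \big[addb/false]_i b i.

Lemma spmxE b p i j : spmx b p i j = if p i == j then sgn (b i) else 0.
Proof. by rewrite mxE. Qed.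

Lemma spmx_diag_perm b p : spmx b p = diag_mx (\row_i sgn (b i)) *m perm_mx p.
Proof.
apply/matrixP=> i j; rewrite mul_diag_mx perm_mxEsub !mxE.
by case: eqP; rewrite ?mulr1 ?mulr0.
Qed.

Lemma spmxM b p c q : spmx b p *m spmx c q = spmx (signs_mul b p c) (p * q).
Proof.
apply/matrixP=> i j; rewrite !mxE (bigD1 (p i)) //= big1 => [|k kp].
  rewrite !mxE eqxx permM ffunE sgnD addr0.
  by case: eqP; rewrite ?mulr0 ?mulrA.
by rewrite !mxE eq_sym (negbTE kp) mul0r.
Qed.

Lemma spmx1 : spmx signs0 1 = 1%:M.
Proof. by apply/matrixP=> i j; rewrite !mxE perm1 ffunE; case: eqP. Qed.

Lemma spmx_inj b p c q : spmx b p = spmx c q -> b = c /\ p = q.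
Proof.
move=> e; suff H i : q i = p i /\ b i = c i.
  by split; [apply/ffunP | apply/permP] => i; case: (H i).
have := congr1 (fun M : 'M[algC]_n => M i (p i)) e; rewrite !mxE eqxx.
case: eqP => [-> /sgn_inj -> //|_ /eqP].
by rewrite (negbTE (sgn_neq0 _)).
Qed.

Lemma spmxV b p : spmx b p *m spmx (signs_inv b p) (p^-1)%g = 1%:M.
Proof.
rewrite spmxM mulgV -spmx1; congr spmx; apply/ffunP=> i.
by rewrite !ffunE permK addbb.
Qed.

Lemma spmx_unit b p : spmx b p \in unitmx.
Proof. by case: (mulmx1_unit (spmxV b p)). Qed.

Lemma invmx_spmx b p : invmx (spmx b p) = spmx (signs_inv b p) (p^-1)%g.
Proof.
by rewrite -[invmx _]mulmx1 -(spmxV b p) mulmxA mulVmx ?spmx_unit ?mul1mx.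
Qed.

Lemma scale_spmx k b p : sgn k *: spmx b p = spmx (signs_flip b k) p.
Proof.
apply/matrixP=> i j; rewrite !mxE ffunE sgnD.
by case: eqP; rewrite ?mulr0 // mulrC.
Qed.

Lemma tau_spmx s t : s != t -> tau_mx s t = spmx (sign_at s) (tperm s t).
Proof.
move=> st; apply/matrixP=> i j; rewrite !mxE ffunE.
have ts : t != s by rewrite eq_sym.
case: (eqVneq j s) => [->|js]; last case: (eqVneq j t) => [->|jt];
  case: tpermP => [->|->|/eqP ni /eqP nt];
  rewrite ?eqxx ?(negbTE st) ?(negbTE ts) ?(negbTE ni) ?(negbTE nt) ?oppr0 //.
- by rewrite !(eq_sym _ j) (negbTE js) (negbTE jt).
- by rewrite !(eq_sym _ j) (negbTE js) (negbTE jt).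
- by case: eqVneq.
Qed.

Lemma parityE b : parity b = odd #|[set i | b i]|.
Proof.
rewrite -sum1_card big_mkcond /= /parity.
rewrite (big_morph odd (id1 := false) (op1 := addb) oddD) //.
by apply: eq_bigr => i _; rewrite inE; case: (b i).
Qed.

Lemma parity_mul b p c : parity (signs_mul b p c) = parity b (+) parity c.
Proof.
rewrite /parity [X in _ = _ (+) X](reindex_inj (@perm_inj _ p)) /= -big_split /=.
by apply: eq_bigr => i _; rewrite ffunE.
Qed.

Lemma parity_inv b p : parity (signs_inv b p) = parity b.
Proof.
rewrite /parity (reindex_inj (@perm_inj _ p)) /=.
by apply: eq_bigr => i _; rewrite ffunE permK.
Qed.

Lemma parity0 : parity signs0 = false.
Proof. by rewrite /parity big1 // => i _; rewrite ffunE. Qed.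

Lemma parity_flip b k : parity (signs_flip b k) = parity b (+) (odd n && k).
Proof.
have -> : odd n && k = parity [ffun _ => k].
  rewrite parityE; case: k; rewrite ?andbT ?andbF.
    by rewrite -[n in odd n]card_ord; congr odd; apply: eq_card => i;
      rewrite inE ffunE.
  by rewrite (_ : [set i | _] = set0) ?cards0 //; apply/setP=> i; rewrite !inE ffunE.
by rewrite /parity -big_split /=; apply: eq_bigr => i _; rewrite !ffunE.
Qed.

Lemma parity_at s : parity (sign_at s) = true.
Proof.
rewrite /parity (bigD1 s) //= big1 => [|i]; rewrite ffunE ?eqxx //.
exact: negbTE.
Qed.

Lemma prod_sgn b : \prod_i sgn (b i) = sgn (parity b).
Proof. by rewrite /parity (big_morph sgn (id1 := 1) (op1 := *%R) sgnD). Qed.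

Lemma det_spmx b p : \det (spmx b p) = sgn (parity b (+) odd_perm p).
Proof.
rewrite spmx_diag_perm det_mulmx det_diag det_perm sgnD -prod_sgn.
by congr (_ * _); apply: eq_bigr => i _; rewrite mxE.
Qed.

Lemma row_sum_spmx b p i : \sum_j spmx b p i j = sgn (b i).
Proof.
rewrite (bigD1 (p i)) //= big1 => [|j jp]; first by rewrite spmxE eqxx addr0.
by rewrite spmxE eq_sym (negbTE jp).
Qed.

Lemma signed_perm_spmx (M : 'M[algC]_n) :
  signed_perm_mx M <-> exists b p, M = spmx b p.
Proof.
split=> [[d [p [Hd ->]]] | [b [p ->]]].
  exists [ffun i => d 0 i == -1], p; rewrite spmx_diag_perm.
  by congr (diag_mx _ *m _); apply/rowP=> i; rewrite !mxE ffunE -pm1_sgn.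
exists (\row_i sgn (b i)), p; split=> [i|]; last exact: spmx_diag_perm.
by rewrite mxE; apply: sgn_pm1.
Qed.

Lemma G22n_spmx (M : 'M[algC]_n) :
  G22n M <-> exists b p, M = spmx b p /\ parity b = false.
Proof.
split=> [[d [p [Hd [even_d ->]]]] | [b [p [-> even_b]]]].
  exists [ffun i => d 0 i == -1], p; split.
    rewrite spmx_diag_perm; congr (diag_mx _ *m _).
    by apply/rowP=> i; rewrite !mxE ffunE -pm1_sgn.
  rewrite parityE; apply/negbTE; congr (~~ odd _): even_d.
  by apply: eq_card => i; rewrite !inE ffunE.
exists (\row_i sgn (b i)), p; split=> [i|]; first by rewrite mxE; apply: sgn_pm1.
split; last exact: spmx_diag_perm.
suff -> : [set i | (\row_j sgn (b j)) 0 i == -1] = [set i | b i].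
  by rewrite -parityE even_b.
by apply/setP=> i; rewrite !inE mxE sgn_eqN1.
Qed.

End SignedPermutations.
Arguments signs0 {n}.
Arguments signsT {n}.

Section GeneratedGroup.
Variable n : nat.
Implicit Types (b c : {ffun 'I_n -> bool}) (p q : 'S_n) (s t : 'I_n).

Lemma Mn12_spmx M : Mn12 M -> exists b p, M = spmx b p /\ parity b = odd_perm p.
Proof.
elim=> [|s t st|A B _ [b [p [-> hb]]] _ [c [q [-> hc]]]|A _ [b [p [-> hb]]]].
- by exists signs0, 1%g; rewrite spmx1 parity0 odd_perm1.
- by exists (sign_at s), (tperm s t); rewrite tau_spmx // parity_at odd_tperm st.
- by exists (signs_mul b p c), (p * q)%g; rewrite spmxM parity_mul odd_permM hb hc.
- by exists (signs_inv b p), (p^-1)%g; rewrite invmx_spmx parity_inv odd_permV.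
Qed.

(* The sign vector with signs exactly at s and t (when s != t). *)
Definition sign_pair s t : {ffun 'I_n -> bool} := signs_mul (sign_at s) 1 (sign_at t).

Lemma parity_pair s t : parity (sign_pair s t) = false.
Proof. by rewrite parity_mul !parity_at. Qed.

(* Squaring tau_{s,t,1} gives the diagonal matrix with -1 exactly at s, t. *)
Lemma Mn12_sign_pair s t : s != t -> Mn12 (spmx (sign_pair s t) 1).
Proof.
move=> st; have -> : spmx (sign_pair s t) 1 = tau_mx s t *m tau_mx s t.
  rewrite tau_spmx // spmxM tperm2; congr spmx; apply/ffunP=> i; rewrite !ffunE perm1.
  have ts : (t == s) = false by rewrite eq_sym (negbTE st).
  by case: tpermP => [->|->|/eqP/negbTE -> /eqP/negbTE ->]; rewrite ?eqxx ?ts.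
by apply: Mn12_mul; apply: Mn12_tau.
Qed.

(* The diagonal sign matrices with an even number of -1 lie in M(n,1,2):
   remove the signs two at a time. *)
Lemma Mn12_diag c : parity c = false -> Mn12 (spmx c 1).
Proof.
have [k] := ubnP #|[set i | c i]|; elim: k c => // k IH c; rewrite ltnS => Hk Hc.
have [c0 | [s]] := set_0Vmem [set i | c i].
  have -> : c = signs0.
    by apply/ffunP=> i; rewrite ffunE; have := in_set0 i; rewrite -c0 inE.
  by rewrite spmx1; constructor.
rewrite inE => cs.
have [t /andP[ts ct]] : exists t, (t != s) && c t.
  apply/existsP; apply: contraFT Hc => /existsPn none_but_s.
  rewrite /parity (bigD1 s) //= big1 ?cs // => i nis.
  by have := none_but_s i; rewrite nis => /negbTE.
pose c' := [ffun i => c i && (i != s) && (i != t)].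
have Ec : c = signs_mul c' 1 (sign_pair s t).
  apply/ffunP=> i; rewrite !ffunE !perm1.
  case: (i =P s) => [->|_]; first by rewrite cs [s == t]eq_sym (negbTE ts).
  by case: (i =P t) => [->|_]; rewrite ?ct /= ?andbT ?addbF.
have -> : spmx c 1 = spmx c' 1 *m spmx (sign_pair s t) 1 by rewrite spmxM mul1g -Ec.
apply: Mn12_mul (Mn12_sign_pair _); last by rewrite eq_sym.
apply: IH; last by move: Hc; rewrite Ec parity_mul parity_pair addbF.
have sub : [set i | c' i] \subset [set i | c i] :\ s.
  by apply/subsetP=> i; rewrite !inE ffunE => /andP[/andP[-> ->] _].
apply: leq_ltn_trans (subset_leq_card sub) _.
by rewrite (cardsD1 s [set i | c i]) inE cs add1n in Hk.
Qed.

(* Every permutation has a signed lift in M(n,1,2): a product of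
   transpositions lifts to the corresponding product of mystic reflections. *)
Lemma Mn12_perm_lift p : exists b, Mn12 (spmx b p).
Proof.
have [ts -> _] := prod_tpermP p; elim: ts => [|[s t] ts [b IH]] /=.
  by exists signs0; rewrite big_nil spmx1; constructor.
rewrite big_cons /=; have [<-|st] := eqVneq s t.
  by rewrite tperm1 mul1g; exists b.
exists (signs_mul (sign_at s) (tperm s t) b).
by rewrite -spmxM -tau_spmx //; apply: Mn12_mul => //; apply: Mn12_tau.
Qed.

Lemma Mn12_spmxP b p : Mn12 (spmx b p) <-> parity b = odd_perm p.
Proof.
split=> [/Mn12_spmx [b' [p' [/spmx_inj [-> ->] //]]] | hb].
have [b' Hb'] := Mn12_perm_lift p.
have [_ [_ [/spmx_inj [<- <-] hb']]] := Mn12_spmx Hb'.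
have -> : spmx b p = spmx (signs_mul b 1 b') 1 *m spmx b' p.
  rewrite spmxM mul1g; congr spmx; apply/ffunP=> i.
  by rewrite !ffunE !perm1 -addbA addbb addbF.
apply: Mn12_mul Hb'; apply: Mn12_diag.
by rewrite parity_mul hb hb' addbb.
Qed.

Lemma Mn12_det1 (M : 'M[algC]_n) : Mn12 M <-> signed_perm_mx M /\ \det M = 1.
Proof.
have det1P b p : \det (spmx b p) = 1 <-> parity b = odd_perm p.
  rewrite det_spmx; split=> [/eqP | ->]; rewrite ?addbb // sgn_eq1 => /negPn.
  by case: (parity b); case: (odd_perm p).
split=> [hM | [/signed_perm_spmx [b [p ->]]]]; last by move/det1P/Mn12_spmxP.
have [b [p [-> hb]]] := Mn12_spmx hM.
by split; [apply/signed_perm_spmx; exists b, p | apply/det1P].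
Qed.

End GeneratedGroup.

Section Order.
Variable n : nat.
Hypothesis n_gt0 : (0 < n)%N.

Definition Mn12_params : {set {ffun 'I_n -> bool} * 'S_n} :=
  [set x | parity x.1 == odd_perm x.2].

(* Toggling one fixed sign swaps the pairs of even and odd parity, so
   exactly half of the 2^n n! pairs describe elements of M(n,1,2). *)
Lemma card_Mn12_params : #|Mn12_params| = (2 ^ n.-1 * n`!)%N.
Proof.
pose toggle (x : {ffun 'I_n -> bool} * 'S_n) :=
  (signs_mul x.1 1 (sign_at (Ordinal n_gt0)), x.2).
have toggleK : involutive toggle.
  move=> [b p]; congr pair; apply/ffunP=> i.
  by rewrite !ffunE perm1 -addbA addbb addbF.
have toggle_params : toggle @: Mn12_params = ~: Mn12_params.
  apply/setP=> x; rewrite inE -[x in LHS]toggleK mem_imset; last exact: inv_inj toggleK.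
  by rewrite !inE parity_mul parity_at addbT; case: (parity _); case: (odd_perm _).
have := cardsC Mn12_params; rewrite -toggle_params (card_imset _ (inv_inj toggleK)).
rewrite card_prod card_ffun card_bool !card_ord card_Sn.
have -> : (2 ^ n = 2 * 2 ^ n.-1)%N by rewrite -expnS prednK.
by rewrite addnn -mul2n -mulnA => /eqP; rewrite eqn_pmul2l // => /eqP.
Qed.

Lemma Mn12_enum : exists s : seq 'M[algC]_n,
  [/\ uniq s, size s = (2 ^ n.-1 * n`!)%N & forall M, Mn12 M <-> M \in s].
Proof.
exists [seq spmx x.1 x.2 | x <- enum Mn12_params]; split.
- rewrite map_inj_uniq ?enum_uniq // => [[b p] [c q]] /= /spmx_inj [-> ->] //.
- by rewrite size_map -cardE card_Mn12_params.
move=> M; split=> [hM | /mapP [[b p]]].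
  have [b [p [-> hb]]] := Mn12_spmx hM.
  by apply/mapP; exists (b, p); rewrite // mem_enum inE hb.
by rewrite mem_enum inE => /eqP hb ->; apply/Mn12_spmxP.
Qed.

End Order.

Section OddIsomorphism.
Variable n : nat.
Hypothesis n_odd : odd n.
Implicit Types (b c : {ffun 'I_n -> bool}) (p q : 'S_n).

(* For n odd, rescaling a signed permutation matrix by its sign
   sgn (parity b) = prod_i (sum_j M i j) makes its number of minus signs
   even; the result only depends on p and on b up to a global flip. *)
Definition rescale (M : 'M[algC]_n) : 'M[algC]_n := (\prod_i \sum_j M i j) *: M.

Lemma rescale_spmx b p : rescale (spmx b p) = spmx (signs_flip b (parity b)) p.
Proof.
rewrite /rescale (eq_bigr (fun i => sgn (b i))) => [|i _]; last exact: row_sum_spmx.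
by rewrite prod_sgn scale_spmx.
Qed.

Lemma parity_rescaled b : parity (signs_flip b (parity b)) = false.
Proof. by rewrite parity_flip n_odd addbb. Qed.

Lemma Mn12_iso_G22n_odd : mx_group_isomorphic (@Mn12 n) (@G22n n).
Proof.
exists rescale; split.
- move=> _ /Mn12_spmx [b [p [-> _]]]; apply/G22n_spmx.
  by exists (signs_flip b (parity b)), p; rewrite rescale_spmx parity_rescaled.
- move=> _ _ /Mn12_spmx [b [p [-> hb]]] /Mn12_spmx [c [q [-> hc]]].
  rewrite !rescale_spmx => /spmx_inj [/ffunP ebc epq]; rewrite epq in hb *.
  by congr spmx; apply/ffunP=> i; have := ebc i; rewrite !ffunE hb hc => /addIb.
- move=> _ /G22n_spmx [c [q [-> hc]]].
  exists (spmx (signs_flip c (odd_perm q)) q).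
    by apply/Mn12_spmxP; rewrite parity_flip hc n_odd.
  rewrite rescale_spmx parity_flip hc n_odd /=; congr spmx; apply/ffunP=> i.
  by rewrite !ffunE -addbA addbb addbF.
- move=> _ _ /Mn12_spmx [b [p [-> _]]] /Mn12_spmx [c [q [-> _]]].
  rewrite spmxM !rescale_spmx spmxM parity_mul; congr spmx; apply/ffunP=> i.
  by rewrite !ffunE; case: (b i); case: (c (p i)); case: (parity b); case: (parity c).
Qed.

End OddIsomorphism.

Section PermutationParity.
Variable T : finType.
Implicit Type s : {perm T}.

Lemma porbit_dvd s x k : ((s ^+ k)%g x == x) = (#|porbit s x| %| k)%N.
Proof.
set d := #|porbit s x|.
have d_gt0 : (0 < d)%N by rewrite lt0n card_porbit_neq0.
have sXd q : (s ^+ (q * d))%g x = x.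
  elim: q => [|q IH]; first by rewrite mul0n expg0 perm1.
  by rewrite mulSn expgD permM [(s ^+ d)%g x]permX iter_porbit IH.
apply/eqP/idP => [|/dvdnP [q ->]]; last exact: sXd.
rewrite {1}(divn_eq k d) expgD permM sXd permX /dvdn => sXr; apply/eqP.
have := @nth_uniq _ x (traject s x d) (k %% d) 0; rewrite size_traject.
move/(_ (ltn_pmod k d_gt0) d_gt0 (uniq_traject_porbit s x)).
by rewrite !nth_traject ?ltn_pmod //= sXr eqxx => /esym/eqP.
Qed.

(* If a family of divisors d_i of N > 0 with odd cofactors N / d_i sums to N,
   then it has an odd number of members: the cofactors are odd and the
   relation sum_i 1 / (N / d_i) = 1 clears to a sum of odd numbers. *)
Lemma odd_card_of_odd_cofactors (I : finType) (P : {set I}) (d : I -> nat) N :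
  (0 < N)%N -> (forall i, i \in P -> (d i %| N)%N /\ odd (N %/ d i)) ->
  (\sum_(i in P) d i)%N = N -> odd #|P|.
Proof.
move=> N_gt0 Hd Hsum.
pose g i := (N %/ d i)%N.
pose R i := (\prod_(j in P | j != i) g j)%N.
have odd_prod (Q : pred I) : {subset Q <= P} -> odd (\prod_(j | Q j) g j).
  move=> QP; apply: (big_ind odd) => // [a c oa oc | i /QP iP].
    by rewrite oddM oa oc.
  by case: (Hd i iP).
have dR i : i \in P -> (d i * \prod_(j in P) g j = N * R i)%N.
  move=> iP; rewrite (bigD1 i) //= mulnA.
  by case: (Hd i iP) => di _; rewrite /g [(d i * _)%N]mulnC divnK.
have : (N * \sum_(i in P) R i = N * \prod_(j in P) g j)%N.
  rewrite big_distrr /= -[in RHS]Hsum big_distrl /=.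
  by apply: eq_bigr => i iP; rewrite dR.
move/eqP; rewrite eqn_pmul2l // => /eqP sumR.
have : odd (\prod_(j in P) g j) by apply: odd_prod.
rewrite -sumR (big_morph odd (id1 := false) (op1 := addb) oddD) //.
rewrite (eq_bigr (fun _ => true)) => [|i _]; last by apply: odd_prod => j /andP[].
by rewrite big_const; elim: #|P| => //= m; case: iter.
Qed.

(* A permutation of a set of size 2k whose k-th power is a fixed-point-free
   involution is odd: its cycle lengths divide 2k but not k, so the
   cofactors 2k / length are odd and the number of cycles is odd. *)
Lemma odd_perm_fpf_half s k :
  (0 < k)%N -> #|T| = (k + k)%N -> (s ^+ (k + k) = 1)%g ->
  (forall x, (s ^+ k)%g x != x) -> odd_perm s.
Proof.
move=> k_gt0 cardT sX2k sXk.
have cycle_len x : (#|porbit s x| %| k + k)%N /\ odd ((k + k) %/ #|porbit s x|).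
  have dvd2k : (#|porbit s x| %| k + k)%N by rewrite -porbit_dvd sX2k perm1.
  split=> //; apply: contraT => even_q.
  suff dvdk : (#|porbit s x| %| k)%N by move: (sXk x); rewrite porbit_dvd dvdk.
  set d := #|porbit s x| in dvd2k even_q *; set q := ((k + k) %/ d)%N in even_q.
  have : (k + k = q./2 * d + q./2 * d)%N.
    have := odd_double_half q; rewrite (negbTE even_q) add0n => qE.
    by rewrite -mulnDl [(_ + _)%N in RHS]addnn qE divnK.
  by move/(congr1 half); rewrite !addnn !doubleK => ->; apply: dvdn_mull.
have sum_cycles : (\sum_(O in porbits s) #|O|)%N = (k + k)%N.
  rewrite -cardT -sum1_card (partition_big_imset (porbit s)) /=.
  apply: eq_bigr => _ /imsetP [y _ ->]; rewrite -sum1_card.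
  by apply: eq_bigl => x; rewrite eq_porbit_mem.
rewrite /odd_perm cardT addnn odd_double /=.
apply: (odd_card_of_odd_cofactors _ _ sum_cycles); first by rewrite addn_gt0 k_gt0.
by move=> _ /imsetP [y _ ->].
Qed.

End PermutationParity.

Lemma central_perm_trivial n (q : 'S_n) :
  (2 < n)%N -> (forall t : 'S_n, q * t = t * q)%g -> q = 1%g.
Proof.
move=> n_gt2 q_central; apply/permP => i; rewrite perm1; apply/eqP.
apply: contraT => qi_neq.
have : (0 < #|~: [set i; q i]|)%N.
  rewrite -(leq_add2l #|[set i; q i]|) addn1 cardsC card_ord.
  by apply: leq_ltn_trans n_gt2; rewrite cards2; case: (_ != _).
rewrite card_gt0 => /set0Pn [j]; rewrite !inE => /norP [ji jq].
have := congr1 (fun s : 'S_n => s i) (q_central (tperm i j)).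
rewrite !permM tpermL tpermD ?(eq_sym i) // => /perm_inj eij.
by move: ji; rewrite -eij eqxx.
Qed.

Section SignedAction.
Variable n : nat.
Implicit Types (b : {ffun 'I_n -> bool}) (p q : 'S_n).
Local Notation pm := ('I_n * bool)%type.

(* spmx b p acts on the 2n vectors +-x_i, encoded as pairs (i, sign); this
   action is the product of a sign change and of a permutation of indices. *)
Definition flip_fun b (x : pm) : pm := (x.1, x.2 (+) b x.1).
Lemma flip_fun_inj b : injective (flip_fun b).
Proof. by move=> [i s] [j t] [<-] /addIb ->. Qed.
Definition flip_perm b : {perm pm} := perm (@flip_fun_inj b).

Definition index_fun p (x : pm) : pm := (p x.1, x.2).
Lemma index_fun_inj p : injective (index_fun p).
Proof. by move=> [i s] [j t] [/perm_inj -> ->]. Qed.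
Definition index_perm p : {perm pm} := perm (@index_fun_inj p).

Lemma index_permM p q : index_perm (p * q) = (index_perm p * index_perm q)%g.
Proof. by apply/permP=> [[i s]]; rewrite permM !permE /index_fun /= permM. Qed.

Lemma index_perm_tperm (s t : 'I_n) :
  index_perm (tperm s t) = (tperm (s, false) (t, false) * tperm (s, true) (t, true))%g.
Proof.
have inj0 : injective (fun i : 'I_n => (i, false)) by move=> i j [].
have inj1 : injective (fun i : 'I_n => (i, true)) by move=> i j [].
apply/permP=> [[j []]]; rewrite permM permE /index_fun /=.
  by rewrite [tperm _ _ (j, true)]tpermD ?xpair_eqE ?andbF // (inj_tperm _ _ _ inj1).
by rewrite -(inj_tperm _ _ _ inj0) [tperm (s, true) _ _]tpermD ?xpair_eqE ?andbF.
Qed.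

Lemma odd_index_perm p : odd_perm (index_perm p) = false.
Proof.
have [ts -> _] := prod_tpermP p; elim: ts => [|[s t] ts IH] /=.
  rewrite big_nil (_ : index_perm 1 = 1%g) ?odd_perm1 //.
  by apply/permP=> -[i b]; rewrite !permE /index_fun perm1.
rewrite big_cons index_permM odd_permM IH index_perm_tperm odd_permM !odd_tperm.
by rewrite !xpair_eqE !andbT addbb.
Qed.

(* Changing the signs in b is a product of |b| transpositions. *)
Lemma odd_flip_perm b : odd_perm (flip_perm b) = parity b.
Proof.
have [k] := ubnP #|[set i | b i]|; elim: k b => // k IH b; rewrite ltnS => Hk.
have [b0 | [j]] := set_0Vmem [set i | b i].
  have -> : b = signs0.
    by apply/ffunP=> i; rewrite ffunE; have := in_set0 i; rewrite -b0 inE.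
  have -> : flip_perm signs0 = 1%g.
    by apply/permP=> -[i s]; rewrite perm1 permE /flip_fun ffunE addbF.
  by rewrite odd_perm1 parity0.
rewrite inE => bj; pose b' := [ffun i => b i && (i != j)].
have -> : flip_perm b = (tperm (j, false) (j, true) * flip_perm b')%g.
  apply/permP=> -[i s]; rewrite permM !permE /flip_fun /= ffunE.
  case: (i =P j) => [->|/eqP nij]; last by rewrite !xpair_eqE (negbTE nij) /= nij andbT.
  by case: s; rewrite /= !xpair_eqE !eqxx /= andbF bj.
rewrite odd_mul_tperm xpair_eqE eqxx /= IH.
  rewrite /parity (bigD1 j) //= [in RHS](bigD1 j) //= bj ffunE eqxx andbF /=.
  by congr (~~ _); apply: eq_bigr => i nij; rewrite ffunE nij andbT.
have sub : [set i | b' i] \subset [set i | b i] :\ j.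
  by apply/subsetP=> i; rewrite !inE ffunE => /andP[-> ->].
apply: leq_ltn_trans (subset_leq_card sub) _.
by rewrite (cardsD1 j [set i | b i]) inE bj add1n in Hk.
Qed.

(* The sign vector of the k-th power of spmx b p. *)
Definition signs_pow b p k := iter k (signs_mul b p) signs0.

Lemma signs_powS b p k i : signs_pow b p k.+1 i = b i (+) signs_pow b p k (p i).
Proof. by rewrite /signs_pow /= ffunE. Qed.

Lemma signed_action_exp b p k (x : pm) :
  ((flip_perm b * index_perm p) ^+ k)%g x
    = ((p ^+ k)%g x.1, x.2 (+) signs_pow b p k x.1).
Proof.
elim: k x => [|k IH] [i s]; first by rewrite !expg0 !perm1 /signs_pow /= ffunE addbF.
rewrite expgS permM IH !permM !permE /flip_fun /index_fun /= signs_powS.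
by rewrite expgS permM addbA.
Qed.

(* If (spmx b p)^n = -1 then b has an odd number of signs: the lifted action
   on the 2n signed vectors is an odd permutation (odd_perm_fpf_half). *)
Lemma parity_of_root_neg1 b p :
  (0 < n)%N -> (p ^+ n = 1)%g -> (forall i, signs_pow b p n i) -> parity b.
Proof.
move=> n_gt0 pXn bXn; set pi := (flip_perm b * index_perm p)%g.
have piXn x : (pi ^+ n)%g x = (x.1, ~~ x.2).
  by rewrite signed_action_exp pXn perm1 bXn addbT.
have : odd_perm pi.
  apply: (odd_perm_fpf_half n_gt0).
  - by rewrite card_prod card_ord card_bool muln2 addnn.
  - by apply/permP=> -[i s]; rewrite expgD permM !piXn perm1 negbK.
  - by move=> [i s]; rewrite piXn xpair_eqE eqxx; case: s.
by rewrite odd_permM odd_flip_perm odd_index_perm addbF.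
Qed.

End SignedAction.

(* Powers of square matrices ('M_n is only a ring for n of the form m.+1). *)
Definition mxpow n (A : 'M[algC]_n) k : 'M[algC]_n := iter k (mulmx A) 1%:M.

Section MatrixGroupMorphism.
Variables (n : nat) (G H : 'M[algC]_n -> Prop) (f : 'M[algC]_n -> 'M[algC]_n).
Hypotheses (G1 : G 1%:M) (GM : forall A B, G A -> G B -> G (A *m B)).
Hypothesis H_unit : forall C, H C -> C \in unitmx.
Hypotheses (fGH : forall A, G A -> H (f A))
           (f_onto : forall C, H C -> exists2 A, G A & f A = C)
           (fM : forall A B, G A -> G B -> f (A *m B) = f A *m f B).

Lemma G_mxpow A k : G A -> G (mxpow A k).
Proof. by move=> GA; elim: k => //= k; apply: GM. Qed.

Lemma morph1 : f 1%:M = 1%:M.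
Proof.
have f1_unit : f 1%:M \in unitmx by apply/H_unit/fGH.
have := fM G1 G1; rewrite mul1mx => /(congr1 (mulmx (invmx (f 1%:M)))).
by rewrite mulmxA mulVmx // mul1mx => <-.
Qed.

Lemma morph_mxpow A k : G A -> f (mxpow A k) = mxpow (f A) k.
Proof.
move=> GA; elim: k => [|k IH]; first exact: morph1.
by rewrite [mxpow A _]/= fM ?IH //; apply: G_mxpow.
Qed.

Lemma morph_central z : G z -> (forall A, G A -> z *m A = A *m z) ->
  forall C, H C -> f z *m C = C *m f z.
Proof. by move=> Gz z_central _ /f_onto [A GA <-]; rewrite -!fM // z_central. Qed.

End MatrixGroupMorphism.

Section EvenCase.
Variable n : nat.
Implicit Types (b c : {ffun 'I_n -> bool}) (p q : 'S_n).

Lemma mxpow_spmx b p k : mxpow (spmx b p) k = spmx (signs_pow b p k) (p ^+ k)%g.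
Proof.
elim: k => [|k IH]; first by rewrite /= spmx1.
by rewrite /= IH spmxM expgS.
Qed.

Lemma signs_powE b p k i :
  signs_pow b p k i = \big[addb/false]_(j < k) b ((p ^+ j)%g i).
Proof.
elim: k i => [|k IH] i; first by rewrite big_ord0 /signs_pow /= ffunE.
rewrite signs_powS IH big_ord_recl expg0 perm1; congr addb.
by apply: eq_bigr => j _; rewrite lift0 expgS permM.
Qed.

Definition rot : 'S_n := perm (@ordS_inj n).

Lemma rotX k (i : 'I_n) : val ((rot ^+ k)%g i) = ((i + k) %% n)%N.
Proof.
elim: k => [|k IH]; first by rewrite expg0 perm1 addn0 modn_small.
by rewrite expgSr permM permE /= IH -addn1 modnDml addn1 addnS.
Qed.

Lemma rot_n : (0 < n)%N -> (rot ^+ n)%g = 1%g.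
Proof.
by move=> n_gt0; apply/permP => i; apply/val_inj; rewrite rotX perm1 modnDr modn_small.
Qed.

Lemma odd_rot : (0 < n)%N -> odd_perm rot = ~~ odd n.
Proof.
move=> n_gt0; pose i0 := Ordinal n_gt0.
rewrite /odd_perm; have -> : porbits rot = [set porbit rot i0].
  apply/setP => O; rewrite inE; apply/imsetP/eqP => [[x _ ->]|->]; last by exists i0.
  apply/eqP; rewrite eq_porbit_mem; apply/porbitP; exists x; apply/val_inj.
  by rewrite rotX /= add0n modn_small.
by rewrite card_ord cards1 addbT.
Qed.

(* For n even, the signed n-cycle x_1 -> x_2 -> ... -> x_n -> -x_1 lies in
   M(n,1,2) and is an n-th root of -1. *)
Lemma Mn12_root_neg1 : (0 < n)%N -> ~~ odd n ->
  exists2 x : 'M[algC]_n, Mn12 x & mxpow x n = spmx signsT 1.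
Proof.
move=> n_gt0 n_even; pose i0 := Ordinal n_gt0.
exists (spmx (sign_at i0) rot); first by apply/Mn12_spmxP; rewrite parity_at odd_rot.
rewrite mxpow_spmx rot_n //; congr spmx; apply/ffunP=> i; rewrite signs_powE ffunE.
rewrite -(@reindex_inj _ _ _ _ (fun j : 'I_n => (rot ^+ j)%g i) xpredT (sign_at i0)).
  exact: parity_at.
move=> j1 j2 /(congr1 val); rewrite !rotX => /eqP; rewrite eqn_modDl !modn_small //.
by move/eqP/val_inj.
Qed.

Lemma spmxT_central (A : 'M[algC]_n) : spmx signsT 1 *m A = A *m spmx signsT 1.
Proof.
have -> : spmx signsT 1 = (-1)%:M :> 'M[algC]_(n).
  by apply/matrixP=> i j; rewrite !mxE perm1 ffunE; case: eqP.
by rewrite scalar_mxC.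
Qed.

Lemma commute_perm_mx c q :
  (forall t, spmx c q *m spmx signs0 t = spmx signs0 t *m spmx c q) ->
  (forall t, q * t = t * q)%g /\ (forall i j, c i = c j).
Proof.
move=> commute.
have step t : (q * t = t * q)%g /\ (forall i, c i = c (t i)).
  move: (commute t); rewrite !spmxM => /spmx_inj [/ffunP Ec ->]; split=> // i.
  by have := Ec i; rewrite !ffunE addbF.
split=> [t | i j]; first by case: (step t).
by case: (step (tperm i j)) => _ /(_ i); rewrite tpermL.
Qed.

(* In G(2,2,n), a central n-th power is trivial: its permutation part is
   central in S_n, hence trivial, and its signs are constant; all signs -1
   would force an odd number of signs (parity_of_root_neg1). *)
Lemma G22n_central_pow b p : (1 < n)%N -> parity b = false ->
  (forall C, G22n C -> mxpow (spmx b p) n *m C = C *m mxpow (spmx b p) n) ->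
  mxpow (spmx b p) n = 1%:M.
Proof.
move=> n_gt1 even_b; rewrite mxpow_spmx => central.
have perm_mx_G22n (t : 'S_n) : G22n (spmx signs0 t).
  by apply/G22n_spmx; exists signs0, t; rewrite parity0.
have [pn_central signs_const] :=
  commute_perm_mx (fun t => central _ (perm_mx_G22n t)).
have pn1 : (p ^+ n = 1)%g.
  have [n2 | n_neq2] := eqVneq n 2; last first.
    by apply: central_perm_trivial; rewrite // ltn_neqAle eq_sym n_neq2.
  have := expg_cardG (in_setT p); rewrite cardsT card_Sn.
  by rewrite (_ : n`! = n) // n2.
pose i0 := Ordinal (ltnW n_gt1).
case c0 : (signs_pow b p n i0).
  have : parity b.
    by apply: parity_of_root_neg1 (ltnW n_gt1) pn1 _ => i; rewrite (signs_const _ i0).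
  by rewrite even_b.
rewrite pn1 -spmx1; congr spmx; apply/ffunP=> i.
by rewrite (signs_const _ i0) c0 ffunE.
Qed.

End EvenCase.

(* Part (3), even case: -1 is an n-th power of an element of M(n,1,2) and is
   central there, while G(2,2,n) has no nontrivial central n-th power. *)
Lemma Mn12_not_iso_G22n_even n : (1 < n)%N -> ~~ odd n ->
  ~ mx_group_isomorphic (@Mn12 n) (@G22n n).
Proof.
move=> n_gt1 n_even [f [fGH finj f_onto fM]].
have G22n_unit (C : 'M[algC]_n) : G22n C -> C \in unitmx.
  by case/G22n_spmx => b [p [-> _]]; apply: spmx_unit.
have [x Mx xn] := Mn12_root_neg1 (ltnW n_gt1) n_even.
have Mneg1 : Mn12 (spmx (@signsT n) 1).
  by rewrite -xn; apply: G_mxpow Mx; [apply: Mn12_one | apply: Mn12_mul].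
have fxn : mxpow (f x) n = f (spmx (@signsT n) 1).
  by rewrite -xn (morph_mxpow (Mn12_one n) (@Mn12_mul n) G22n_unit fGH fM).
have : f (spmx (@signsT n) 1) = f 1%:M.
  rewrite (morph1 (Mn12_one n) G22n_unit fGH fM) -fxn.
  case/G22n_spmx: (fGH _ Mx) => b [p [fx even_b]]; rewrite fx.
  apply: G22n_central_pow => // C GC; rewrite -fx fxn.
  exact: morph_central f_onto fM _ Mneg1 (fun A _ => spmxT_central A) _ GC.
move/finj => /(_ Mneg1 (Mn12_one n)); rewrite -spmx1 => /spmx_inj [/ffunP].
by move/(_ (Ordinal (ltnW n_gt1))); rewrite !ffunE.
Qed.

Unset Implicit Arguments.

Theorem mainTheorem19 (n : nat) (hn : (2 <= n)%N) :
  [/\ (forall M : 'M[algC]_n, Mn12 M <-> (signed_perm_mx M /\ \det M = 1)),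
      (exists s : seq 'M[algC]_n,
         [/\ uniq s, size s = (2 ^ n.-1 * n`!)%N &
             forall M, Mn12 M <-> M \in s]) &
      (mx_group_isomorphic (@Mn12 n) (@G22n n) <-> odd n)].
Proof.
split; [exact: Mn12_det1 | exact: Mn12_enum (ltnW hn) |].
split=> [iso | n_odd]; last exact: Mn12_iso_G22n_odd.
by apply: contraT => n_even; case: (Mn12_not_iso_G22n_even hn n_even iso).
Qed.
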